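(* For integers $r_1\le s_1<0$ and $r_2\le s_2<0$, $\mathfrak n(V_{r_1s_1},V_{r_2s_2})=0$ if and only if $s_2<s_1$ or $r_2<r_1$; and $\mathfrak n(V_{rs},V_{rs})=\mathbb K\,\mathrm{Id}$.
   Context: $V_{rs}=\bigoplus_{i=r}^sE_i$ with $\dim E_i=1$ in degree $i$, and $\delta_{rs}$ maps $E_i$ onto $E_{i-1}$ ($r<i\le s$) and $E_r$ to $0$. Each $V_{rs}$ is made an irreducible $\mathfrak{sl}_2$-module via an $\mathfrak{sl}_2$-triple $(\delta_{rs},H,Y)$ in $\mathfrak{gl}(V_{rs})$ with $H$ of degree $0$, $Y$ of degree $1$, $[H,\delta_{rs}]=2\delta_{rs}$, $[H,Y]=-2Y$, $[\delta_{rs},Y]=H$. $\operatorname{Hom}(V_{r_1s_1},V_{r_2s_2})$ carries the induced $\mathfrak{sl}_2$-module structure and grading (degree $k$ maps send $E_i$ to $E_{i+k}$); $\mathfrak n(V_{r_1s_1},V_{r_2s_2})$ is its maximal $\mathfrak{sl}_2$-submodule contained in the sum of components of nonnegative degree. *)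

From HB Require Import structures.
From mathcomp Require Import all_boot all_order all_algebra.
Set Implicit Arguments. Unset Strict Implicit. Unset Printing Implicit Defensive.
Import Order.TTheory GRing.Theory Num.Theory.
Local Open Scope ring_scope.

(* V_{rs} = (+)_{i=r}^s E_i is modelled as column vectors K^(dimV r s);
   the j-th basis vector (j : 'I_(dimV r s)) spans E_{r+j}, of degree r + j. *)
Definition dimV (r s : int) : nat := (absz (s - r)).+1.

(* delta maps E_i onto E_{i-1} (basis e_j |-> e_{j-1}) and E_r to 0. *)
Definition delta (K : fieldType) (n : nat) : 'M[K]_n :=
  \matrix_(i < n, j < n) ((i.+1 == j :> nat)%:R : K).

(* (delta, H, Y) is an sl2-triple in gl(V) with H of degree 0, Y of degree 1. *)
Definition sl2_triple (K : fieldType) (n : nat) (H Y : 'M[K]_n) : Prop :=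
  [/\ (forall i j : 'I_n, i != j -> H i j = 0),
      (forall i j : 'I_n, (i : nat) != j.+1 -> Y i j = 0),
      H *m delta K n - delta K n *m H = delta K n *+ 2,
      H *m Y - Y *m H = - (Y *+ 2) &
      delta K n *m Y - Y *m delta K n = H].

Definition hom_act (K : fieldType) (n1 n2 : nat) (A1 : 'M[K]_n1) (A2 : 'M[K]_n2)
  (f : 'M[K]_(n2, n1)) : 'M[K]_(n2, n1) := A2 *m f - f *m A1.

(* f lies in the sum of the components of nonnegative degree of
   Hom(V_{r1 s1}, V_{r2 s2}): the entry f i j (from E_{r1+j} to E_{r2+i})
   has degree (r2+i)-(r1+j), and negative-degree entries vanish. *)
Definition nonneg_deg (K : fieldType) (r1 r2 : int) (n1 n2 : nat)
  (f : 'M[K]_(n2, n1)) : Prop :=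
  forall (i : 'I_n2) (j : 'I_n1), r2 + (i : nat)%:Z < r1 + (j : nat)%:Z -> f i j = 0.

Definition sl2_submodule (K : fieldType) (n1 n2 : nat)
  (H1 Y1 : 'M[K]_n1) (H2 Y2 : 'M[K]_n2) (S : 'M[K]_(n2, n1) -> Prop) : Prop :=
  [/\ S 0,
      (forall f g, S f -> S g -> S (f + g)),
      (forall (c : K) f, S f -> S (c *: f)) &
      (forall f, S f ->
         [/\ S (hom_act (delta K n1) (delta K n2) f),
             S (hom_act H1 H2 f) &
             S (hom_act Y1 Y2 f)])].

(* Membership in n(V1, V2), the maximal sl2-submodule contained in the
   nonnegative-degree part: it is the union of all such submodules. *)
Definition in_frak_n (K : fieldType) (r1 s1 r2 s2 : int)
  (H1 Y1 : 'M[K]_(dimV r1 s1)) (H2 Y2 : 'M[K]_(dimV r2 s2))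
  (f : 'M[K]_(dimV r2 s2, dimV r1 s1)) : Prop :=
  exists S, [/\ sl2_submodule H1 Y1 H2 Y2 S,
               (forall g, S g -> nonneg_deg r1 r2 g) & S f].
Arguments in_frak_n {K} r1 s1 r2 s2 H1 Y1 H2 Y2 f.

From HB Require Import structures.
From mathcomp Require Import all_boot all_order all_algebra.
From mathcomp Require Import zify ring.
Import Order.TTheory GRing.Theory Num.Theory.
Local Open Scope ring_scope.
Set Implicit Arguments. Unset Strict Implicit.

(* Write n1 = s1 - r1 + 1, n2 = s2 - r2 + 1 for the dimensions
   and read an entry f i j of f : Hom(V1, V2) as sitting on the diagonal
   i - j, of degree (r2 - r1) + (i - j).  Since ad delta sends the entry at
   (a + 1, b) and (a, b - 1) to (a, b), it lowers the diagonal by one.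
   1. Rigidity: if ad delta f vanishes on the diagonal k - 1, then f vanishes
      on the diagonal k as soon as k >= 1 or k > n2 - n1 (the diagonal then
      meets the left or the bottom border of the matrix, and the recursion
      propagates the zero along it).  By induction on the diagonal, any
      ad delta-stable space of maps vanishing below such a diagonal is 0.
   2. If s2 < s1 or r2 < r1, every nonnegative-degree submodule is 0 by 1.
   3. Otherwise the diagonal map of offset n1 - n2 is a highest weight vector
      (killed by ad delta) of nonnegative degree; the span of its Y-iterates
      is a nonzero submodule (a general sl2 computation), still of
      nonnegative degree since Y has degree 1.
   4. For V1 = V2, ad delta kills n(V, V) (its diagonal is constant and
      traceless, then apply 1), and the centralizer of delta among lower
      triangular matrices consists of scalars. *)

Section HomAction.
Variable K : fieldType.

Lemma hom_act_is_linear n1 n2 (A1 : 'M[K]_n1) (A2 : 'M[K]_n2) :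
  linear (hom_act A1 A2).
Proof.
move=> c f g; rewrite /hom_act mulmxDr mulmxDl -scalemxAr -scalemxAl.
by rewrite opprD addrACA scalerBr.
Qed.

Lemma hom_act_comm n1 n2 (A1 B1 : 'M[K]_n1) (A2 B2 : 'M[K]_n2) f :
  hom_act A1 A2 (hom_act B1 B2 f) - hom_act B1 B2 (hom_act A1 A2 f)
  = hom_act (A1 *m B1 - B1 *m A1) (A2 *m B2 - B2 *m A2) f.
Proof.
rewrite /hom_act !mulmxBr !mulmxBl !mulmxA.
by apply/matrixP => i j; rewrite !mxE; ring.
Qed.

Lemma hom_act_scalar n (A : 'M[K]_n) c : hom_act A A c%:M = 0.
Proof. by rewrite /hom_act mul_mx_scalar mul_scalar_mx subrr. Qed.

Lemma hom_act_trace n (A : 'M[K]_n) f : \tr (hom_act A A f) = 0.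
Proof. by rewrite /hom_act raddfB /= mxtrace_mulC subrr. Qed.

End HomAction.

HB.instance Definition _ (K : fieldType) n1 n2 (A1 : 'M[K]_n1) (A2 : 'M[K]_n2) :=
  GRing.isLinear.Build K 'M[K]_(n2, n1) 'M[K]_(n2, n1) _ (hom_act A1 A2)
    (hom_act_is_linear A1 A2).

Section TripleFacts.
Variable K : fieldType.

Lemma mx_sub_entry m n (A B : 'M[K]_(m, n)) i j : (A - B) i j = A i j - B i j.
Proof. by rewrite !mxE. Qed.

Lemma diag_mulmx_entry n p (D : 'M[K]_n) (g : 'M[K]_(n, p)) i j :
  (forall i j : 'I_n, i != j -> D i j = 0) -> (D *m g) i j = D i i * g i j.
Proof.
move=> Ddiag; rewrite mxE (bigD1 i) //= big1 ?addr0 // => l nli.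
by rewrite Ddiag ?mul0r // eq_sym.
Qed.

Lemma mulmx_diag_entry n p (D : 'M[K]_n) (g : 'M[K]_(p, n)) i j :
  (forall i j : 'I_n, i != j -> D i j = 0) -> (g *m D) i j = g i j * D j j.
Proof.
move=> Ddiag; rewrite mxE (bigD1 j) //= big1 ?addr0 // => l nlj.
by rewrite Ddiag ?mulr0.
Qed.

Lemma triple_H_entry m (H Y : 'M[K]_m.+1) :
  sl2_triple H Y -> forall i : 'I_m.+1, H i i = H ord0 ord0 - 2 * i%:R.
Proof.
case=> Hdiag _ HD _ _.
have step a : (a.+1 < m.+1)%N ->
    H (inord a) (inord a) - H (inord a.+1) (inord a.+1) = 2.
  move=> lt_a; have := congr1 (fun M : 'M[K]_m.+1 => M (inord a) (inord a.+1)) HD.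
  rewrite /= mx_sub_entry diag_mulmx_entry // mulmx_diag_entry // mulmxnE !mxE.
  by rewrite !inordK ?eqxx ?mulr1 ?mul1r //; lia.
suff H_inord a : (a < m.+1)%N -> H (inord a) (inord a) = H ord0 ord0 - 2 * a%:R.
  by move=> i; rewrite -H_inord ?inord_val.
elim: a => [|a IH] lt_a.
  by rewrite mulr0 subr0; congr (H _ _); apply: val_inj; rewrite /= inordK.
have := step a lt_a; rewrite IH; last by lia.
set u := H ord0 ord0 - _; set x := H _ _ => e.
by rewrite -[x](subKr u) e -natr1 /u; ring.
Qed.

Lemma triple_hom_relations m1 m2 (H1 Y1 : 'M[K]_m1) (H2 Y2 : 'M[K]_m2) :
  sl2_triple H1 Y1 -> sl2_triple H2 Y2 ->
  (forall f, hom_act H1 H2 (hom_act Y1 Y2 f) - hom_act Y1 Y2 (hom_act H1 H2 f)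
             = - (hom_act Y1 Y2 f *+ 2)) /\
  (forall f, hom_act (delta K m1) (delta K m2) (hom_act Y1 Y2 f)
             - hom_act Y1 Y2 (hom_act (delta K m1) (delta K m2) f)
             = hom_act H1 H2 f).
Proof.
case=> _ _ _ HY1 DY1; case=> _ _ _ HY2 DY2; split => f; rewrite hom_act_comm.
  rewrite HY1 HY2 -!scaler_nat -!scaleNr /hom_act.
  by rewrite -scalemxAl -scalemxAr -scalerBr.
by congr (hom_act _ _ f).
Qed.

(* Y has degree 1, so ad Y preserves the nonnegative-degree part. *)
Lemma hom_act_Y_nonneg m1 m2 (r1 r2 : int) (H1 Y1 : 'M[K]_m1) (H2 Y2 : 'M[K]_m2) g :
  sl2_triple H1 Y1 -> sl2_triple H2 Y2 ->
  nonneg_deg r1 r2 g -> nonneg_deg r1 r2 (hom_act Y1 Y2 g).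
Proof.
case=> _ Y1deg _ _ _; case=> _ Y2deg _ _ _ gnn i j hij.
rewrite !mxE big1 ?sub0r => [|l _]; last first.
  have [il|] := eqVneq (i : nat) l.+1; last by move/Y2deg ->; rewrite mul0r.
  by rewrite gnn ?mulr0 //; lia.
rewrite big1 ?oppr0 // => l _.
have [lj|] := eqVneq (l : nat) j.+1; last by move/Y1deg ->; rewrite mulr0.
by rewrite gnn ?mul0r //; lia.
Qed.

End TripleFacts.

Section DeltaRigidity.
Variables (K : fieldType) (m1 m2 : nat).
Local Notation adD := (hom_act (delta K m1.+1) (delta K m2.+1)).

Lemma sum_indicator n (F : 'I_n.+1 -> K) c :
  \sum_(l < n.+1) (c == l :> nat)%:R * F l
  = if (c < n.+1)%N then F (inord c) else 0.
Proof.
case: ltnP => lt_c.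
  rewrite (bigD1 (inord c)) //= inordK // eqxx mul1r big1 ?addr0 // => l nlc.
  rewrite (_ : (c == l :> nat) = false) ?mul0r //.
  by apply: contraNF nlc => /eqP ->; rewrite inord_val.
rewrite big1 // => l _; rewrite (_ : (c == l :> nat) = false) ?mul0r //.
by apply/negbTE; rewrite neq_ltn (leq_trans (ltn_ord l) lt_c) orbT.
Qed.

Definition ext_entry (g : 'M[K]_(m2.+1, m1.+1)) (a b : nat) : K :=
  if (a < m2.+1)%N && (b < m1.+1)%N then g (inord a) (inord b) else 0.

Lemma ext_entry_out g a b :
  ~~ ((a < m2.+1)%N && (b < m1.+1)%N) -> ext_entry g a b = 0.
Proof. by rewrite /ext_entry => /negbTE ->. Qed.

Lemma ext_entry_ord g (i : 'I_m2.+1) (j : 'I_m1.+1) : ext_entry g i j = g i j.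
Proof. by rewrite /ext_entry !ltn_ord !inord_val. Qed.

Lemma hom_act_delta_entry g a b : (a < m2.+1)%N -> (b < m1.+1)%N ->
  adD g (inord a) (inord b)
  = ext_entry g a.+1 b - (if b is b'.+1 then ext_entry g a b' else 0).
Proof.
move=> lt_a lt_b; rewrite !mxE; congr (_ - _).
  under eq_bigr => l _ do rewrite mxE inordK //.
  by rewrite sum_indicator /ext_entry lt_b andbT.
case: b lt_b => [|b] lt_b.
  by rewrite big1 // => l _; rewrite mxE inordK // mulr0.
under eq_bigr => l _ do rewrite mxE inordK // eqSS eq_sym mulrC.
by rewrite sum_indicator /ext_entry lt_a.
Qed.

(* Rigidity of a diagonal: if ad delta g vanishes on the diagonal k - 1, then
   g vanishes on the diagonal k, provided this diagonal starts in the first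
   column (k >= 1) or ends in the last row (k > n2 - n1): the zero at that
   end propagates along it. *)
Lemma diagonal_rigid g (k : int) :
  1 <= k \/ (m2.+1)%:Z - (m1.+1)%:Z < k ->
  (forall (i : 'I_m2.+1) (j : 'I_m1.+1),
     (i : nat)%:Z - (j : nat)%:Z = k - 1 -> adD g i j = 0) ->
  forall (i : 'I_m2.+1) (j : 'I_m1.+1), (i : nat)%:Z - (j : nat)%:Z = k -> g i j = 0.
Proof.
move=> k_border adD0.
have shift a b : (a < m2.+1)%N -> (b < m1.+1)%N -> a%:Z - b%:Z = k - 1 ->
    ext_entry g a.+1 b = (if b is b'.+1 then ext_entry g a b' else 0).
  move=> lt_a lt_b ab; apply/eqP; rewrite -subr_eq0 -hom_act_delta_entry //.
  by apply/eqP/adD0; rewrite !inordK.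
move=> i j ij; rewrite -ext_entry_ord.
have [k_pos | k_npos] := lerP 1 k.
  pose m := (absz k).-1.
  suff diag0 b : ext_entry g (b + m.+1) b = 0.
    by have -> : (i : nat) = (j + m.+1)%N by rewrite /m; lia.
  elim: b => [|b IH].
    have [lt_m | ge_m] := ltnP m m2.+1; first by rewrite add0n shift //; lia.
    by rewrite ext_entry_out //; apply/nandP; left; rewrite -leqNgt; lia.
  have [/andP [lt_a lt_b] | out] := boolP ((b + m.+1 < m2.+1)%N && (b.+1 < m1.+1)%N).
    by rewrite (_ : (b.+1 + m.+1 = (b + m.+1).+1)%N) ?shift //; lia.
  by rewrite ext_entry_out //; apply: contra out => /andP [? ?]; apply/andP; lia.
have k_low : (m2.+1)%:Z - (m1.+1)%:Z < k by case: k_border => //; lia.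
pose m := absz k.
suff diag0 t a : (m2.+1 <= a + t)%N -> ext_entry g a (a + m) = 0.
  have -> : (j : nat) = (i + m)%N by rewrite /m; lia.
  by apply: (diag0 m2.+1); rewrite leq_addl.
elim: t a => [|t IH] a a_t.
  by rewrite ext_entry_out //; apply/nandP; left; rewrite -leqNgt; lia.
have [lt_a | ge_a] := ltnP a m2.+1; last first.
  by rewrite ext_entry_out //; apply/nandP; left; rewrite -leqNgt.
have lt_b : (a + m.+1 < m1.+1)%N by rewrite /m; lia.
have := shift a (a + m.+1)%N lt_a lt_b; rewrite addnS /= => <-; last by lia.
by rewrite -addSn IH //; lia.
Qed.

(* An ad delta-stable family of maps, all vanishing below a diagonal k0 with
   k0 >= 1 or k0 > n2 - n1, is zero: push the vanishing up diagonal by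
   diagonal with the rigidity lemma. *)
Lemma delta_stable_zero (U : 'M[K]_(m2.+1, m1.+1) -> Prop) (k0 : int) :
  1 <= k0 \/ (m2.+1)%:Z - (m1.+1)%:Z < k0 ->
  (forall g, U g -> U (adD g)) ->
  (forall g, U g -> forall (i : 'I_m2.+1) (j : 'I_m1.+1),
     (i : nat)%:Z - (j : nat)%:Z < k0 -> g i j = 0) ->
  forall g, U g -> g = 0.
Proof.
move=> k0_border U_adD U_low.
have below t g : U g -> forall (i : 'I_m2.+1) (j : 'I_m1.+1),
    (i : nat)%:Z - (j : nat)%:Z < k0 + t%:Z -> g i j = 0.
  elim: t g => [|t IH] g Ug i j ij; first by apply: U_low; rewrite // addr0 in ij.
  have [lt_ij | ge_ij] := ltP ((i : nat)%:Z - (j : nat)%:Z) (k0 + t%:Z).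
    exact: IH.
  apply: (diagonal_rigid (k := k0 + t%:Z)); [lia | move=> i' j' ij' | lia].
  by apply: IH (U_adD _ Ug) _ _ _; lia.
move=> g Ug; apply/matrixP => i j; rewrite mxE.
by apply: (below (absz ((i : nat)%:Z - (j : nat)%:Z - k0)%R).+1 g Ug i j); lia.
Qed.

End DeltaRigidity.

Section FiniteSpan.
Variables (K : fieldType) (V : lmodType K) (b : nat -> V).

Definition in_span (v : V) : Prop :=
  exists n (c : nat -> K), v = \sum_(i < n) c i *: b i.

Lemma in_span0 : in_span 0.
Proof. by exists 0%N, (fun=> 0); rewrite big_ord0. Qed.

Lemma in_spanZ a v : in_span v -> in_span (a *: v).
Proof.
move=> [n [c ->]]; exists n, (fun i => a * c i).
by rewrite scaler_sumr; apply: eq_bigr => i _; rewrite scalerA.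
Qed.

Lemma in_spanD v w : in_span v -> in_span w -> in_span (v + w).
Proof.
have pad n q (c : nat -> K) : (n <= q)%N ->
    \sum_(i < n) c i *: b i = \sum_(i < q) (if (i < n)%N then c i else 0) *: b i.
  move=> le_nq; rewrite (big_ord_widen q (fun i => c i *: b i)) // big_mkcond.
  by apply: eq_bigr => i _; case: ifP; rewrite ?scale0r.
move=> [n [c ->]] [p [d ->]]; rewrite (pad n (maxn n p)) ?leq_maxl //.
rewrite (pad p (maxn n p)) ?leq_maxr // -big_split /=.
exists (maxn n p),
  (fun i => (if (i < n)%N then c i else 0) + (if (i < p)%N then d i else 0)).
by apply: eq_bigr => i _; rewrite scalerDl.
Qed.

Lemma in_span_gen k : in_span (b k).
Proof.
exists k.+1, (fun i => (i == k)%:R); rewrite big_ord_recr /= eqxx scale1r.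
rewrite big1 ?add0r // => i _.
by rewrite (_ : (i == k :> nat) = false) ?scale0r // ltn_eqF.
Qed.

Lemma in_span_linear (L : {linear V -> V}) :
  (forall k, in_span (L (b k))) -> forall v, in_span v -> in_span (L v).
Proof.
move=> Lb _ [n [c ->]]; rewrite linear_sum.
apply: (big_ind in_span in_span0 in_spanD) => i _.
by rewrite linearZ; apply: in_spanZ.
Qed.

End FiniteSpan.

Section HighestWeightString.
Variables (K : fieldType) (V : lmodType K) (e h y : {linear V -> V}).
Hypothesis hy_rel : forall v, h (y v) - y (h v) = - (y v *+ 2).
Hypothesis ey_rel : forall v, e (y v) - y (e v) = h v.
Variables (v0 : V) (lam : K).
Hypotheses (e_v0 : e v0 = 0) (h_v0 : h v0 = lam *: v0).

Definition ystring (k : nat) : V := iter k y v0.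

Lemma h_ystring k : h (ystring k) = (lam - 2 * k%:R) *: ystring k.
Proof.
elim: k => [|k IH]; first by rewrite mulr0 subr0.
move/eqP: (hy_rel (ystring k)); rewrite subr_eq IH linearZ /= => /eqP ->.
by rewrite -scaler_nat -scaleNr -scalerDl -natr1; congr (_ *: _); ring.
Qed.

Lemma e_ystring k : exists c, e (ystring k.+1) = c *: ystring k.
Proof.
elim: k => [|k [c IH]].
  exists lam; move/eqP: (ey_rel v0); rewrite subr_eq e_v0 linear0 addr0.
  by move=> /eqP ->.
exists (c + (lam - 2 * k.+1%:R)).
move/eqP: (ey_rel (ystring k.+1)); rewrite subr_eq => /eqP ->.
by rewrite h_ystring IH linearZ scalerDl addrC.
Qed.

Lemma ystring_span_stable v : in_span ystring v ->
  [/\ in_span ystring (e v), in_span ystring (h v) & in_span ystring (y v)].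
Proof.
move=> Sv; split; apply: in_span_linear Sv => k.
- case: k => [|k]; first by rewrite e_v0; apply: in_span0.
  by have [c ->] := e_ystring k; apply/in_spanZ/in_span_gen.
- by rewrite h_ystring; apply/in_spanZ/in_span_gen.
- exact: (in_span_gen ystring k.+1).
Qed.

End HighestWeightString.

Section HighestWeightMap.
Variables (K : fieldType) (m1 m2 : nat).
Variables (H1 Y1 : 'M[K]_m1.+1) (H2 Y2 : 'M[K]_m2.+1).
Hypotheses (t1 : sl2_triple H1 Y1) (t2 : sl2_triple H2 Y2).
Local Notation offset := (m1.+1 - m2.+1)%N.

(* The map with ones on the diagonal j = i + offset (it sends E_{r1+j} onto
   E_{r2+j-offset}); it is killed by ad delta, i.e. it is a highest weight
   vector of Hom(V1, V2). *)
Definition hw_map : 'M[K]_(m2.+1, m1.+1) :=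
  \matrix_(i, j) ((i + offset)%N == j :> nat)%:R.

Lemma hw_map_neq0 : hw_map != 0.
Proof.
apply/negP => /eqP /matrixP /(_ ord0 (inord offset)).
by rewrite !mxE inordK ?add0n ?eqxx; [move/eqP; rewrite oner_eq0 | lia].
Qed.

Lemma ext_hw_map a b : ext_entry hw_map a b
  = [&& (a < m2.+1)%N, (b < m1.+1)%N & (a + offset == b)%N]%:R.
Proof.
rewrite /ext_entry; case: ltnP => lt_a; case: ltnP => lt_b //=.
by rewrite mxE !inordK.
Qed.

Lemma hw_map_delta : hom_act (delta K m1.+1) (delta K m2.+1) hw_map = 0.
Proof.
apply/matrixP => i j; rewrite [RHS]mxE -[i]inord_val -[j]inord_val.
rewrite hom_act_delta_entry //.
case: (nat_of_ord j) (ltn_ord j) => [|b] lt_b; rewrite !ext_hw_map.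
  by rewrite addSn andbF subr0.
have same_diag : [&& (i < m2.+1)%N, (b < m1.+1)%N & (i + offset == b)%N]
    = [&& (i.+1 < m2.+1)%N, (b.+1 < m1.+1)%N & (i.+1 + offset == b.+1)%N].
  by apply/and3P/and3P => -[? ? /eqP ?]; split=> //; apply/eqP; lia.
by rewrite same_diag subrr.
Qed.

Lemma hw_map_H : hom_act H1 H2 hw_map
  = (H2 ord0 ord0 - H1 ord0 ord0 + 2 * offset%:R) *: hw_map.
Proof.
have [H1diag _ _ _ _] := t1; have [H2diag _ _ _ _] := t2.
apply/matrixP => i j; rewrite mx_sub_entry diag_mulmx_entry // mulmx_diag_entry //.
rewrite [in RHS]mxE mxE; case: eqP => [ij | _]; last by rewrite !(mulr0, mul0r) subr0.
rewrite (triple_H_entry t1) (triple_H_entry t2) -ij natrD; ring.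
Qed.

Local Notation ystr := (ystring (hom_act Y1 Y2) hw_map).

Lemma hw_map_submodule (r1 r2 : int) : offset%:Z <= r2 - r1 ->
  exists S, [/\ sl2_submodule H1 Y1 H2 Y2 S,
              (forall g, S g -> nonneg_deg r1 r2 g) & S hw_map].
Proof.
move=> offset_le; have [hy_rel ey_rel] := triple_hom_relations t1 t2.
exists (in_span ystr); split.
- split; [exact: in_span0 | exact: in_spanD | exact: in_spanZ |] => f Sf.
  by have [] := ystring_span_stable hy_rel ey_rel hw_map_delta hw_map_H Sf.
- have ystr_nonneg k : nonneg_deg r1 r2 (ystr k).
    elim: k => [|k IH]; last exact: hom_act_Y_nonneg t1 t2 IH.
    by move=> i j ij; rewrite mxE; case: eqP => // ji; lia.
  move=> _ [n [c ->]] i j ij; rewrite summxE big1 // => k _.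
  by rewrite mxE ystr_nonneg ?mulr0.
- exact: (in_span_gen _ 0).
Qed.

End HighestWeightMap.

Section SelfHom.
Variables (K : fieldType) (m : nat) (r : int).
Local Notation adD := (hom_act (delta K m.+1) (delta K m.+1)).

(* If ad delta x vanishes above the diagonal, x has a constant diagonal:
   the entry (a, a + 1) of ad delta x is x (a + 1, a + 1) - x (a, a). *)
Lemma diag_const (x : 'M[K]_m.+1) :
  nonneg_deg r r (adD x) -> forall i, x i i = x ord0 ord0.
Proof.
move=> adx_nn.
suff x_inord a : (a < m.+1)%N -> x (inord a) (inord a) = x ord0 ord0.
  by move=> i; rewrite -(x_inord i (ltn_ord i)) inord_val.
elim: a => [|a IH] lt_a; first by congr (x _ _); apply: val_inj; rewrite /= inordK.
have lt_a' : (a < m.+1)%N by lia.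
have : adD x (inord a) (inord a.+1) = 0 by apply: adx_nn; rewrite !inordK //; lia.
rewrite hom_act_delta_entry // /ext_entry lt_a lt_a' /= => /eqP.
by rewrite subr_eq0 => /eqP ->; apply: IH.
Qed.

(* Lower triangular maps commuting with delta are scalar: the diagonal is
   constant and each lower diagonal is rigid. *)
Lemma centralizer_scalar (x : 'M[K]_m.+1) :
  nonneg_deg r r x -> adD x = 0 -> x = (x ord0 ord0)%:M.
Proof.
move=> x_nn adx0; apply/matrixP => i j; rewrite mxE -val_eqE /=.
have adx_nn : nonneg_deg r r (adD x) by move=> i' j' _; rewrite adx0 mxE.
have [lt_ij | lt_ji | /val_inj <-] := ltngtP i j.
- by rewrite mulr0n x_nn //; lia.
- rewrite mulr0n; apply: (diagonal_rigid (k := (i : nat)%:Z - (j : nat)%:Z)).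
  + by left; lia.
  + by move=> i' j' _; rewrite adx0 mxE.
  + by [].
- by rewrite mulr1n (diag_const adx_nn).
Qed.

Lemma scalar_submodule (H Y : 'M[K]_m.+1) :
  sl2_submodule H Y H Y (fun g => exists c : K, g = c%:M) /\
  (forall g : 'M[K]_m.+1, (exists c : K, g = c%:M) -> nonneg_deg r r g).
Proof.
split.
- split=> [|_ _ [a ->] [b ->]|a _ [b ->]|_ [b ->]].
  + by exists 0; rewrite raddf0.
  + by exists (a + b); rewrite raddfD.
  + by exists (a * b); rewrite scale_scalar_mx.
  + by split; exists 0; rewrite hom_act_scalar raddf0.
- move=> _ [b ->] i j ij; rewrite mxE (_ : (i == j) = false) //.
  by apply: contraTF ij => /eqP ->; rewrite ltxx.
Qed.

Hypothesis charK0 : [pchar K] =i pred0.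

(* In characteristic 0, ad delta kills every submodule of End(V) of
   nonnegative degree: the image under ad delta is ad delta-stable and
   strictly lower triangular, its diagonal being constant and traceless. *)
Lemma delta_kills_submodule (H Y : 'M[K]_m.+1) S :
  sl2_submodule H Y H Y S -> (forall g, S g -> nonneg_deg r r g) ->
  forall g, S g -> adD g = 0.
Proof.
move=> [_ _ _ S_act] S_nn.
have S_adD g : S g -> S (adD g) by case/S_act.
have diag0 g : S g -> forall i, adD g i i = 0.
  move=> Sg; have dc := diag_const (S_nn _ (S_adD _ (S_adD _ Sg))).
  have := hom_act_trace (delta K m.+1) g.
  rewrite /mxtrace (eq_bigr _ (fun i _ => dc i)) sumr_const card_ord -mulr_natr.
  move=> /eqP; rewrite mulf_eq0 ((pcharf0P K).1 charK0) orbF => /eqP adg0 i.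
  by rewrite dc adg0.
pose U h := exists2 g, S g & h = adD g.
move=> g Sg; apply: (delta_stable_zero (U := U) (k0 := 1)); last by exists g.
- by left.
- by move=> _ [h Sh ->]; exists (adD h) => //; apply: S_adD.
move=> _ [h Sh ->] i j ij; have [lt_ij | /val_inj <-] : (i < j)%N \/ i = j :> nat.
- by case: ltngtP => [lt_ij|lt_ji|->]; [left | lia | right].
- by apply: (S_nn _ (S_adD _ Sh)); lia.
- exact: diag0.
Qed.

End SelfHom.

Theorem mainTheorem13 (K : fieldType) (charK0 : [pchar K] =i pred0) :
  (forall (r1 s1 r2 s2 : int),
     r1 <= s1 -> s1 < 0 -> r2 <= s2 -> s2 < 0 ->
     forall (H1 Y1 : 'M[K]_(dimV r1 s1)) (H2 Y2 : 'M[K]_(dimV r2 s2)),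
     sl2_triple H1 Y1 -> sl2_triple H2 Y2 ->
     ((forall f, in_frak_n r1 s1 r2 s2 H1 Y1 H2 Y2 f -> f = 0)
        <-> (s2 < s1 \/ r2 < r1)))
  /\
  (forall (r s : int), r <= s -> s < 0 ->
     forall (H Y : 'M[K]_(dimV r s)), sl2_triple H Y ->
     forall f, in_frak_n r s r s H Y H Y f <-> exists c : K, f = c%:M).
Proof.
split.
  move=> r1 s1 r2 s2 le_rs1 _ le_rs2 _ H1 Y1 H2 Y2 t1 t2.
  split=> [n_zero | border f [S [S_sub S_nn Sf]]].
    have [lt_s | le_s] := ltP s2 s1; first by left.
    have [lt_r | le_r] := ltP r2 r1; first by right.
    have [|S [S_sub S_nn S0]] := hw_map_submodule t1 t2 (r1 := r1) (r2 := r2).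
      by lia.
    have := hw_map_neq0 K (absz (s1 - r1)) (absz (s2 - r2)).
    by rewrite (n_zero (hw_map K _ _)) ?eqxx //; exists S.
  have [_ _ _ S_act] := S_sub.
  apply: (delta_stable_zero (U := S) (k0 := r1 - r2)) Sf.
  - by lia.
  - by move=> g /S_act [].
  - by move=> g Sg i j ij; apply: (S_nn g Sg); rewrite /dimV; lia.
move=> r s le_rs _ H Y t f; split=> [[S [S_sub S_nn Sf]] | [c ->]].
  exists (f ord0 ord0); apply: centralizer_scalar (S_nn _ Sf) _.
  exact: (delta_kills_submodule charK0 S_sub S_nn Sf).
have [scalar_sub scalar_nn] := scalar_submodule r H Y.
by exists (fun g => exists c : K, g = c%:M); split=> //; exists c.
Qed.
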